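(* Let $\mathbb{k}$ be a field of characteristic $0$ containing a primitive $n$-th root of unity $\omega$, let $H=T_{n^2}(\omega)$ be the Taft Hopf algebra, let $A=\mathbb{k}[z]/(z^n-\omega)$ with $u$ the image of $z$, let $a_i=(\omega-1)^i\omega^{i(i+1)/2}$, and let $$\rho(u)=\sum_{i=0}^{n-1}a_i\,x^ig^{-(i+1)}\otimes u^{i+1}\in H\otimes A .$$ Then for every $1\le s\le n$, in the algebra $H\otimes A$, $$\rho(u)^s=\sum_{k=0}^{n-1}a_k\Big(\sum_{\{0\le i_1,\dots,i_s\le k\ \mid\ \sum_{j=1}^s i_j=k\}}\omega^{\sum_{j=2}^s i_j(j-1)}\Big)\,x^kg^{-(k+s)}\otimes u^{k+s}.$$
   Context: The Taft Hopf algebra is $H=T_{n^2}(\omega)=\mathbb{k}\langle x,g\mid x^n=0,\ g^n=1,\ xg=\omega gx\rangle$ with $\Delta(g)=g\otimes g$, $\Delta(x)=x\otimes 1+g\otimes x$, $\epsilon(g)=1$, $\epsilon(x)=0$. $H\otimes A$ carries the tensor product algebra structure. *)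

From mathcomp Require Import all_boot all_order all_algebra.
Set Implicit Arguments. Unset Strict Implicit. Unset Printing Implicit Defensive.
Import Order.TTheory GRing.Theory Num.Theory.
Local Open Scope ring_scope.

(* The algebra H (x) A, H = T_{n^2}(w) the Taft algebra, A = k[z]/(z^n - w),
   realised on its PBW basis  x^i g^j (x) u^m  (0 <= i,j,m < n).  Product of basis elements (tensor product algebra):
     (x^i g^j (x) u^m)(x^k g^l (x) u^r)
       = w^(-jk) x^(i+k) g^(j+l mod n) (x) u^(m+r)
   with x^(i+k) = 0 if i+k >= n, and u^(m+r) = w u^(m+r-n) if m+r >= n.
   (Uses g x = w^-1 x g, g^n = 1, x^n = 0, u^n = w.) *)
Notation HA F n := {ffun 'I_n * 'I_n * 'I_n -> (F%type)^o}.

Section TaftTensor.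
Variables (F : fieldType) (n : nat) (w : F).


Definition HAmul (p q : HA F n) : HA F n :=
  [ffun t : 'I_n * 'I_n * 'I_n =>
    \sum_(a : 'I_n * 'I_n * 'I_n) \sum_(b : 'I_n * 'I_n * 'I_n)
      if [&& (a.1.1 + b.1.1 == t.1.1)%N,
             ((a.1.2 + b.1.2) %% n == t.1.2)%N &
             ((a.2 + b.2) %% n == t.2)%N]
      then p a * q b * (w^-1) ^+ (a.1.2 * b.1.1)
             * (if (n <= a.2 + b.2)%N then w else 1)
      else 0].

Definition HAbasis (i j m : nat) : HA F n :=
  [ffun t : 'I_n * 'I_n * 'I_n =>
    if [&& (t.1.1 == i :> nat), (t.1.2 == j :> nat) & (t.2 == m :> nat)]
    then 1 else 0].

Definition HAone : HA F n := HAbasis 0 0 0.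
Definition HAx : HA F n := HAbasis 1 0 0.
Definition HAg : HA F n := HAbasis 0 1 0.
Definition HAginv : HA F n := HAbasis 0 n.-1 0.  (* g^-1 = g^(n-1) (x) 1 *)
Definition HAu : HA F n := HAbasis 0 0 1.

Definition HApow (p : HA F n) (s : nat) : HA F n := iter s (HAmul p) HAone.

End TaftTensor.

Definition taft_a (F : fieldType) (w : F) (i : nat) : F :=
  (w - 1) ^+ i * w ^+ ((i * i.+1)./2).

Definition taft_rho (F : fieldType) (n : nat) (w : F) : HA F n :=
  \sum_(i < n) taft_a w i *:
     HAmul w (HAmul w (HApow w (HAx F n) i) (HApow w (HAginv F n) i.+1))
             (HApow w (HAu F n) i.+1).

From mathcomp Require Import all_boot all_order all_algebra.
From mathcomp Require Import ring zify.
Import GRing.Theory.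
Set Implicit Arguments. Unset Strict Implicit.
Local Open Scope ring_scope.

(* Every factor of rho(u) is a scaled monomial x^i g^-(i+1) (x) u^(i+1), and the
   product of monomials is again a scaled monomial, the scalar coming from
   commuting g's past x's.  Expanding rho(u) * rho(u)^s therefore gives a
   convolution in the x-degree; since a_i a_k w^(ik) = a_(i+k), the coefficient of
   the degree-k monomial in rho(u)^s is a_k P_s(k), where P_s satisfies
   P_(s+1)(k) = sum_i w^(k-i) P_s(k-i).  Splitting off the first part of a
   composition of k into s+1 parts shows that the weighted count of compositions
   in the statement satisfies the same recursion. *)

Lemma triangular_mul2 m : ((m * m.+1)./2 * 2 = m * m.+1)%N.
Proof. by rewrite muln2 -[RHS]odd_double_half oddM andbN add0n. Qed.

Lemma triangularD i k :
  ((i * i.+1)./2 + (k * k.+1)./2 + i * k = ((i + k) * (i + k).+1)./2)%N.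
Proof.
apply/eqP; rewrite -(eqn_pmul2r (_ : 0 < 2)%N) // triangular_mul2 !mulnDl !triangular_mul2.
by apply/eqP; ring.
Qed.

Lemma taft_aD (F : fieldType) (w : F) i k :
  taft_a w i * taft_a w k * w ^+ (i * k) = taft_a w (i + k).
Proof. by rewrite /taft_a -triangularD !exprD; ring. Qed.

Section Convolution.
Variables (R : pzRingType) (M : lmodType R) (n : nat) (V : nat -> M).
Hypothesis V_overflow : forall K, (n <= K)%N -> V K = 0.

Lemma sumZ_shift i (G : nat -> R) :
  \sum_(k < n) G k *: V (i + k) = \sum_(K < n) (if (i <= K)%N then G (K - i)%N else 0) *: V K.
Proof.
set H := fun K => (if (i <= K)%N then G (K - i)%N else 0) *: V K.
rewrite -(big_mkord xpredT (fun k => G k *: V (i + k)%N)) -(big_mkord xpredT H).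
have <- : \sum_(0 <= K < i + n) H K = \sum_(0 <= K < n) H K.
  rewrite (big_cat_nat (leq0n n) (leq_addl i n)) /= [X in _ + X]big1_seq ?addr0 //.
  move=> K /andP[_]; rewrite mem_index_iota => /andP[le_nK _].
  by rewrite /H V_overflow ?scaler0.
rewrite [RHS](big_cat_nat (leq0n i) (leq_addr n i)) /= [X in _ = X + _]big1_seq ?add0r.
  rewrite (big_addn 0 (i + n) i) addKn; apply: eq_bigr => k _.
  by rewrite /H leq_addl addnK addnC.
move=> K /andP[_]; rewrite mem_index_iota => /andP[_].
by rewrite /H ltnNge => /negbTE->; rewrite scale0r.
Qed.

Lemma sumZ_convolution (G : nat -> nat -> R) :
  \sum_(i < n) \sum_(k < n) G i k *: V (i + k) =
  \sum_(K < n) (\sum_(i < K.+1) G i (K - i)%N) *: V K.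
Proof.
under eq_bigr do rewrite sumZ_shift.
rewrite exchange_big /=; apply: eq_bigr => K _; rewrite -scaler_suml; congr (_ *: _).
rewrite (big_ord_widen_cond n xpredT (fun i => G i (K - i)%N)) //.
by rewrite [RHS]big_mkcond /=; apply: eq_bigr => i _; rewrite ltnS.
Qed.

End Convolution.

Section WeightedCompositions.
Variables (R : pzRingType) (w : R).

(* wcomp s k is the Gaussian binomial [k + s - 1, k] at w. *)
Fixpoint wcomp s k : R :=
  if s is s'.+1 then \sum_(i < k.+1) w ^+ (k - i)%N * wcomp s' (k - i)%N else (k == 0)%:R.

Definition ffun_cons N s (a : 'I_N) (f : {ffun 'I_s -> 'I_N}) : {ffun 'I_s.+1 -> 'I_N} :=
  [ffun j => if unlift ord0 j is Some j' then f j' else a].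

Definition ffun_behead N s (f : {ffun 'I_s.+1 -> 'I_N}) : {ffun 'I_s -> 'I_N} :=
  [ffun j => f (lift ord0 j)].

Lemma ffun_cons_behead N s (f : {ffun 'I_s.+1 -> 'I_N}) : ffun_cons (f ord0) (ffun_behead f) = f.
Proof. by apply/ffunP => j; rewrite !ffunE; case: unliftP => [j'|] ->; rewrite ?ffunE. Qed.

Lemma ffun_behead_cons N s a (f : {ffun 'I_s -> 'I_N}) : ffun_behead (ffun_cons a f) = f.
Proof. by apply/ffunP => j; rewrite !ffunE liftK. Qed.

Lemma ffun_cons0 N s a (f : {ffun 'I_s -> 'I_N}) : ffun_cons a f ord0 = a.
Proof. by rewrite ffunE unlift_none. Qed.

Lemma ffun_consS N s a (f : {ffun 'I_s -> 'I_N}) j : ffun_cons a f (lift ord0 j) = f j.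
Proof. by rewrite ffunE liftK. Qed.

Lemma sum_compositions N s k : (k <= N)%N ->
  \sum_(f : {ffun 'I_s -> 'I_N.+1} | (\sum_(j < s) (f j : nat) == k)%N)
    w ^+ (\sum_(j < s) (f j : nat) * j) = wcomp s k.
Proof.
elim: s k => [|s IH] k le_kN.
  rewrite (eq_bigl (fun=> k == 0)%N) => [|f]; last by rewrite big_ord0 eq_sym.
  case: (k =P 0)%N => [->|/eqP/negbTE k_neq0] /=; last by rewrite k_neq0 big_pred0_eq.
  by rewrite (eq_bigr (fun=> 1)) => [|f _]; rewrite ?big_ord0 // sumr_const card_ffun !card_ord.
rewrite (partition_big (fun f : {ffun 'I_s.+1 -> 'I_N.+1} => f ord0) predT) //=.
rewrite (eq_bigr (fun a : 'I_N.+1 => if (a <= k)%N then w ^+ (k - a)%N * wcomp s (k - a)%N else 0)).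
  rewrite -big_mkcond /=.
  by rewrite (big_ord_widen_cond N.+1 xpredT (fun a => w ^+ (k - a)%N * wcomp s (k - a)%N)).
move=> a _; rewrite (reindex_onto (ffun_cons a) (@ffun_behead N.+1 s)) => [|f /andP[_ /eqP <-]];
  last by rewrite ffun_cons_behead.
rewrite (eq_bigl (fun f : {ffun 'I_s -> 'I_N.+1} =>
                    (\sum_(j < s) (f j : nat) == k - a)%N && (a <= k)%N)) => [|f].
  case: leqP => le_ak; last by rewrite big_pred0 // => f; rewrite andbF.
  rewrite -IH ?(leq_trans (leq_subr _ _)) // mulr_sumr.
  apply: eq_big => [f|f /andP[/eqP sum_f _]]; first by rewrite andbT.
  rewrite big_ord_recl ffun_cons0 muln0 add0n -exprD; congr (w ^+ _).
  under eq_bigr do rewrite ffun_consS lift0 mulnS addnC.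
  by rewrite big_split /= sum_f addnC.
rewrite ffun_behead_cons eqxx andbT ffun_cons0 eqxx andbT big_ord_recl ffun_cons0.
under eq_bigr do rewrite ffun_consS.
by apply/eqP/andP => [<-|[/eqP-> le_ak]]; [rewrite addKn leq_addr | rewrite subnKC].
Qed.

End WeightedCompositions.

Section TaftTensorMultiplication.
Variables (F : fieldType) (n : nat) (w : F).

Local Notation HAmul := (HAmul w).

Lemma HAbasisE i j m (lt_in : (i < n)%N) (lt_jn : (j < n)%N) (lt_mn : (m < n)%N) :
  HAbasis F n i j m =
    [ffun t => if t == (Ordinal lt_in, Ordinal lt_jn, Ordinal lt_mn) then 1 else 0].
Proof. by apply/ffunP => -[[a b] c]; rewrite !ffunE !xpair_eqE andbA. Qed.

Lemma HAmul_basis i j m k l r (lt_in : (i < n)%N) (lt_jn : (j < n)%N)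
    (lt_mn : (m < n)%N) (lt_kn : (k < n)%N) (lt_ln : (l < n)%N) (lt_rn : (r < n)%N) :
  HAmul (HAbasis F n i j m) (HAbasis F n k l r) =
  [ffun t : 'I_n * 'I_n * 'I_n =>
     if [&& (i + k == t.1.1)%N, ((j + l) %% n == t.1.2)%N & ((m + r) %% n == t.2)%N]
     then (w^-1) ^+ (j * k) * (if (n <= m + r)%N then w else 1) else 0].
Proof.
rewrite (HAbasisE lt_in lt_jn lt_mn) (HAbasisE lt_kn lt_ln lt_rn).
apply/ffunP => t; rewrite !ffunE (bigD1 (Ordinal lt_in, Ordinal lt_jn, Ordinal lt_mn)) //=.
rewrite [X in _ + X]big1 => [|a /negbTE a_neq]; last first.
  by apply: big1 => b _; rewrite ffunE a_neq !mul0r; case: ifP.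
rewrite addr0 (bigD1 (Ordinal lt_kn, Ordinal lt_ln, Ordinal lt_rn)) //=.
rewrite [X in _ + X]big1 => [|b /negbTE b_neq]; last first.
  by rewrite !ffunE eqxx b_neq !mulr0 !mul0r; case: ifP.
by rewrite !ffunE !eqxx addr0 !mul1r; case: ifP.
Qed.

Lemma HAmulDl (p q r : HA F n) : HAmul (p + q) r = HAmul p r + HAmul q r.
Proof.
apply/ffunP => t; rewrite !ffunE -big_split; apply: eq_bigr => a _.
rewrite -big_split; apply: eq_bigr => b _; rewrite !ffunE.
by case: ifP => _ /=; rewrite ?addr0 // !(@mulrDl F).
Qed.

Lemma HAmulDr (p q r : HA F n) : HAmul p (q + r) = HAmul p q + HAmul p r.
Proof.
apply/ffunP => t; rewrite !ffunE -big_split; apply: eq_bigr => a _.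
rewrite -big_split; apply: eq_bigr => b _; rewrite !ffunE.
by case: ifP => _ /=; rewrite ?addr0 // (@mulrDr F) !(@mulrDl F).
Qed.

Lemma HAmulZl c (p q : HA F n) : HAmul (c *: p) q = c *: HAmul p q.
Proof.
apply/ffunP => t; rewrite !ffunE scaler_sumr; apply: eq_bigr => a _.
rewrite scaler_sumr; apply: eq_bigr => b _; rewrite !ffunE.
by case: ifP; rewrite ?scaler0 // !scalerAl.
Qed.

Lemma HAmulZr c (p q : HA F n) : HAmul p (c *: q) = c *: HAmul p q.
Proof.
apply/ffunP => t; rewrite !ffunE scaler_sumr; apply: eq_bigr => a _.
rewrite scaler_sumr; apply: eq_bigr => b _; rewrite !ffunE.
by case: ifP; rewrite ?scaler0 //= /GRing.scale /= !(@mulrA F) ((@mulrC F) (p a)).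
Qed.

Lemma HAmul0l (q : HA F n) : HAmul 0 q = 0.
Proof. by have := HAmulZl 0 0 q; rewrite !scale0r. Qed.

Lemma HAmul0r (p : HA F n) : HAmul p 0 = 0.
Proof. by have := HAmulZr 0 p 0; rewrite !scale0r. Qed.

Lemma HAmul_suml I (r : seq I) (P : pred I) (G : I -> HA F n) q :
  HAmul (\sum_(i <- r | P i) G i) q = \sum_(i <- r | P i) HAmul (G i) q.
Proof. by apply: (big_morph (HAmul^~ q)) => [p p'|]; rewrite ?HAmulDl ?HAmul0l. Qed.

Lemma HAmul_sumr I (r : seq I) (P : pred I) (G : I -> HA F n) p :
  HAmul p (\sum_(i <- r | P i) G i) = \sum_(i <- r | P i) HAmul p (G i).
Proof. by apply: (big_morph (HAmul p)) => [q q'|]; rewrite ?HAmulDr ?HAmul0r. Qed.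

(* The element x^i g^j (x) u^m for arbitrary exponents, reduced with x^n = 0,
   g^n = 1 and u^n = w. *)
Definition HAmon i j m : HA F n :=
  if (i < n)%N then w ^+ (m %/ n) *: HAbasis F n i (j %% n) (m %% n) else 0.

Lemma HAmon_overflow i j m : (n <= i)%N -> HAmon i j m = 0.
Proof. by rewrite /HAmon leqNgt => /negbTE ->. Qed.

Lemma HAmul_mon (n_gt0 : (0 < n)%N) i j m k l r :
  HAmul (HAmon i j m) (HAmon k l r) = (w^-1) ^+ (j %% n * k) *: HAmon (i + k) (j + l) (m + r).
Proof.
have [le_ni|lt_in] := leqP n i.
  by rewrite HAmon_overflow ?HAmul0l ?HAmon_overflow ?scaler0 // (leq_trans le_ni) ?leq_addr.
have [le_nk|lt_kn] := leqP n k.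
  by rewrite (@HAmon_overflow k) // HAmul0r HAmon_overflow ?scaler0 // (leq_trans le_nk) ?leq_addl.
rewrite /HAmon lt_in lt_kn HAmulZl HAmulZr HAmul_basis ?ltn_pmod //.
have [lt_ikn|le_nik] := ltnP (i + k) n; apply/ffunP => t; rewrite !ffunE; last first.
  have /negbTE-> : (i + k)%N != t.1.1 by rewrite neq_ltn (leq_trans (ltn_ord _)) ?orbT.
  by rewrite !scaler0.
rewrite !modnDm (eq_sym (t.1.1 : nat)) (eq_sym (t.1.2 : nat)) (eq_sym (t.2 : nat)).
case: ifP => _; last by rewrite !scaler0.
rewrite /GRing.scale /= divnD //.
by case: leqP => _; rewrite !exprD /= ?expr1 ?expr0; ring.
Qed.

End TaftTensorMultiplication.

Section TaftMonomials.
Variables (F : fieldType) (n : nat) (w : F).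
Hypotheses (n_gt1 : (1 < n)%N) (wn1 : w ^+ n = 1).

Let n_gt0 : (0 < n)%N. Proof. exact: ltnW. Qed.

Local Notation HAmon := (HAmon n w).

Lemma HAbasis_mon i j m : (i < n)%N -> (j < n)%N -> (m < n)%N ->
  HAbasis F n i j m = HAmon i j m.
Proof.
by move=> lt_in lt_jn lt_mn; rewrite /HAmon lt_in divn_small // !modn_small // scale1r.
Qed.

Lemma HApow_mon i j m k : (j * i = 0)%N ->
  HApow w (HAmon i j m) k = HAmon (i * k) (j * k) (m * k).
Proof.
move=> ji0; elim: k => [|k IH]; first by rewrite !muln0 /= /HAone HAbasis_mon.
rewrite [LHS]/= IH HAmul_mon // !mulnS.
suff -> : (j %% n * (i * k) = 0)%N by rewrite expr0 scale1r.
by move/eqP: ji0; rewrite muln_eq0 => /orP[] /eqP->; rewrite ?mod0n ?mul0n ?muln0.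
Qed.

Lemma HApow_x k : HApow w (HAx F n) k = HAmon k 0 0.
Proof. by rewrite /HAx HAbasis_mon // HApow_mon // !mul0n mul1n. Qed.

Lemma HApow_ginv k : HApow w (HAginv F n) k = HAmon 0 (n.-1 * k) 0.
Proof. by rewrite /HAginv HAbasis_mon ?prednK // HApow_mon ?muln0 // !mul0n. Qed.

Lemma HApow_u k : HApow w (HAu F n) k = HAmon 0 0 k.
Proof. by rewrite /HAu HAbasis_mon // HApow_mon // !mul0n mul1n. Qed.

Lemma HAmul_mon_xgu i j m :
  HAmul w (HAmul w (HAmon i 0 0) (HAmon 0 j 0)) (HAmon 0 0 m) = HAmon i j m.
Proof.
by rewrite HAmul_mon // mod0n mul0n expr0 scale1r HAmul_mon // muln0 expr0 scale1r !addn0 !add0n.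
Qed.

Lemma exprV_predn_mod j k : (w^-1) ^+ (n.-1 * j %% n * k) = w ^+ (j * k).
Proof.
have w_neq0 : w != 0 by apply: contra_eq_neq wn1 => ->; rewrite expr0n gtn_eqF // eq_sym oner_eq0.
have wVpredn : (w^-1) ^+ n.-1 = w.
  by rewrite exprVn -[RHS]invrK; congr _^-1; apply: (mulfI w_neq0); rewrite -exprS prednK // mulfV.
by rewrite exprM expr_mod; [rewrite exprM wVpredn -exprM | rewrite exprVn wn1 invr1].
Qed.

Lemma taft_rho_mon : taft_rho n w = \sum_(i < n) taft_a w i *: HAmon i (n.-1 * i.+1) i.+1.
Proof. by apply: eq_bigr => i _; rewrite HApow_x HApow_ginv HApow_u HAmul_mon_xgu. Qed.

Lemma HApow_taft_rho s : HApow w (taft_rho n w) s =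
  \sum_(k < n) (taft_a w k * wcomp w s k) *: HAmon k (n.-1 * (k + s)) (k + s).
Proof.
elim: s => [|s IH].
  rewrite (bigD1 (Ordinal n_gt0)) //= big1 => [|k k_neq0]; last first.
    by rewrite (_ : (k == 0 :> nat) = false) ?mulr0 ?scale0r //; apply/negbTE.
  by rewrite /taft_a !expr0 !mul1r scale1r addr0 muln0 /HAone HAbasis_mon.
pose G i k := taft_a w i * (taft_a w k * wcomp w s k * w ^+ (i.+1 * k)).
pose V K := HAmon K (n.-1 * (K + s.+1)) (K + s.+1).
have mul_terms i k :
    HAmul w (taft_a w i *: HAmon i (n.-1 * i.+1) i.+1)
            ((taft_a w k * wcomp w s k) *: HAmon k (n.-1 * (k + s)) (k + s)) = G i k *: V (i + k).
  rewrite HAmulZl HAmulZr HAmul_mon // exprV_predn_mod !scalerA /G /V.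
  by congr (_ *: HAmon _ _ _); [ring | rewrite -mulnDr; congr (_ * _)%N | ]; lia.
rewrite [LHS]/= IH taft_rho_mon HAmul_suml.
under eq_bigr do rewrite HAmul_sumr (eq_bigr _ (fun _ _ => mul_terms _ _)).
rewrite sumZ_convolution => [|K le_nK]; last exact: HAmon_overflow.
apply: eq_bigr => K _; congr (_ *: _); rewrite /= mulr_sumr; apply: eq_bigr => i _.
have := taft_aD w i (K - i); rewrite subnKC ?(ltnSE (ltn_ord i)) // => <-.
by rewrite /G mulSn exprD; ring.
Qed.

End TaftMonomials.

Theorem proposition3p6 (F : fieldType) (n : nat) (w : F)
  (charF0 : [pchar F] =i pred0) (n_gt1 : (1 < n)%N)
  (w_prim : n.-primitive_root w) (s : nat) (hs1 : (1 <= s)%N) (hs2 : (s <= n)%N) :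
  HApow w (taft_rho n w) s =
  \sum_(k < n)
     (taft_a w k *
      \sum_(f : {ffun 'I_s -> 'I_k.+1} | (\sum_(j < s) (f j : nat) == k)%N)
          w ^+ (\sum_(j < s) (f j : nat) * j)%N) *:
     HAmul w (HAmul w (HApow w (HAx F n) k) (HApow w (HAginv F n) (k + s)))
             (HApow w (HAu F n) (k + s)).
Proof.
have wn1 : w ^+ n = 1 by exact: prim_expr_order.
rewrite HApow_taft_rho //; apply: eq_bigr => k _.
by rewrite sum_compositions // HApow_x // HApow_ginv // HApow_u // HAmul_mon_xgu // ltnW.
Qed.
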